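(* Let $f$ be a successor function for a geometry $(G,I,O)$ and let $\mathcal P_f$ be its induced path cover. Then $f$ is a flow function (i.e. there is a partial order $\le$ on $V(G)$ with $(f,\le)$ a flow) if and only if $\mathcal P_f$ is a causal path cover.
   Context: Graphs are finite, simple, undirected, without self-loops; $v\sim w$ denotes adjacency. A geometry is $(G,I,O)$ with $I,O\subseteq V(G)$; $O^c=V(G)\setminus O$, $I^c=V(G)\setminus I$. A flow for $(G,I,O)$ is a pair $(f,\le)$, $f:O^c\to I^c$, $\le$ a partial order on $V(G)$, with, for all $v\in O^c$, $w\in V(G)$: $v\sim f(v)$; $v\le f(v)$; $w\sim f(v)\Rightarrow v\le w$. A path cover of $(G,I,O)$ is a collection of directed paths in $G$ (possibly trivial) such that every vertex lies on exactly one path, each path meets $I$ at most at its initial vertex, and each path meets $O$ exactly at its final vertex. A successor function is an injective $f:O^c\to I^c$ with $v\sim f(v)$ such that the arcs $v\to f(v)$ ($v\in O^c$) form a path cover, denoted $\mathcal P_f$. For a family $\mathcal P$ of vertex-disjoint directed paths, an edge is covered by $\mathcal P$ if it underlies an arc of a path of $\mathcal P$. An influencing walk for $\mathcal P$ is a walk that is a concatenation of zero or more segments of the types (i) $v\to w$, an arc of a path of $\mathcal P$; (ii) $v\to z\to w$ with $v\to z$ an arc of a path of $\mathcal P$ and $zw\in E(G)$ not covered by $\mathcal P$. A vicious circuit for $\mathcal P$ is a closed influencing walk (starting and ending at the same vertex) with at least one segment. A causal path cover is a path cover with no vicious circuits. *)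

From mathcomp Require Import all_boot.
Set Implicit Arguments. Unset Strict Implicit. Unset Printing Implicit Defensive.

Section Defs.
Variable T : finType.

Definition simple_graph (e : rel T) : Prop := symmetric e /\ irreflexive e.

Definition path_cover (e : rel T) (I O : {set T}) (P : seq (seq T)) : Prop :=
  (forall p, p \in P -> exists x q,
       [/\ p = x :: q, path e x q, all (fun y => y \notin I) q,
           all (fun y => y \notin O) (belast x q) & last x q \in O])
  /\ (forall v : T, count_mem v (flatten P) = 1%N).

Definition arcP (P : seq (seq T)) (v w : T) : Prop :=
  exists p, p \in P /\ exists p1 p2, p = p1 ++ v :: w :: p2.

Definition induced_by (O : {set T}) (f : T -> T) (P : seq (seq T)) : Prop :=
  forall v w, arcP P v w <-> (v \notin O /\ f v = w).

(* Successor function (f is only meaningful on O^c). *)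
Definition successor_function (e : rel T) (I O : {set T}) (f : T -> T) : Prop :=
  [/\ (forall v w, v \notin O -> w \notin O -> f v = f w -> v = w),
      (forall v, v \notin O -> e v (f v) /\ f v \notin I)
    & exists P, path_cover e I O P /\ induced_by O f P].

Definition covered (P : seq (seq T)) (z w : T) : Prop := arcP P z w \/ arcP P w z.

Definition infl_segment (e : rel T) (P : seq (seq T)) (v w : T) : Prop :=
  arcP P v w \/ exists z, [/\ arcP P v z, e z w & ~ covered P z w].

Fixpoint pwalk (R : T -> T -> Prop) (x : T) (s : seq T) : Prop :=
  match s with
  | [::] => True
  | y :: s' => R x y /\ pwalk R y s'
  end.

(* A vicious circuit: a closed influencing walk with at least one segment;
   the walk is given by its start x and the endpoints s of its segments. *)
Definition has_vicious_circuit (e : rel T) (P : seq (seq T)) : Prop :=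
  exists x s, [/\ s <> [::], pwalk (infl_segment e P) x s & last x s = x].

Definition causal_path_cover (e : rel T) (I O : {set T}) (P : seq (seq T)) : Prop :=
  path_cover e I O P /\ ~ has_vicious_circuit e P.

Definition is_flow (e : rel T) (I O : {set T}) (f : T -> T) (le : rel T) : Prop :=
  [/\ reflexive le, antisymmetric le, transitive le
    & forall v, v \notin O ->
        [/\ f v \notin I, e v (f v), le v (f v)
          & forall w, e w (f v) -> le v w]].

Definition flow_function (e : rel T) (I O : {set T}) (f : T -> T) : Prop :=
  exists le : rel T, is_flow e I O f le.

End Defs.

From mathcomp Require Import all_boot.
From Stdlib Require Import ClassicalEpsilon.
Set Implicit Arguments. Unset Strict Implicit. Unset Printing Implicit Defensive.

(* Let f be a successor function with induced path cover P.
   (=>) If (f, le) is a flow, every influencing segment v ~> w is strictly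
   increasing for le: w = f v, or w is a neighbour of f v other than v.
   A closed influencing walk would then be a strictly increasing cycle of a
   partial order, which is impossible; so P is causal.
   (<=) If P has no vicious circuit, take for le the reachability order of
   influencing segments (reflexive-transitive closure).  Acyclicity makes it
   antisymmetric; v <= f v is a one-segment walk; and for a neighbour w of
   f v, either f v -> w is an arc (two arc segments), or w -> f v is an arc
   (then w = v by injectivity), or the edge is uncovered (one segment of
   type (ii)). *)

Section Walks.
Variable T : finType.

Lemma path_pwalk (r : rel T) (R : T -> T -> Prop) x s :
  (forall v w, r v w -> R v w) -> path r x s -> pwalk R x s.
Proof.
move=> rR; elim: s x => [//|y s IH] x /= /andP[rxy walk].
by split; [exact: rR | exact: IH].
Qed.

Lemma strict_walk_not_closed (le : rel T) (R : T -> T -> Prop) x s :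
  transitive le -> antisymmetric le ->
  (forall v w, R v w -> le v w /\ v <> w) ->
  s <> [::] -> pwalk R x s -> last x s <> x.
Proof.
move=> le_trans le_anti R_strict.
suff increasing : forall x, s <> [::] -> pwalk R x s ->
    le x (last x s) /\ x <> last x s.
  move=> s_nz walk closed; have [_ neq] := increasing x s_nz walk.
  exact: neq (esym closed).
elim: s {x} => [//|y s IH] x _ /= [Rxy walk].
have [le_xy neq_xy] := R_strict x y Rxy.
case: s IH walk => [//|z s] IH walk.
have [le_y_last _] := IH y ltac:(by []) walk.
split; first exact: le_trans le_y_last.
move=> eq_x_last; apply: neq_xy; apply: le_anti.
by rewrite le_xy /= eq_x_last.
Qed.

Lemma connect_antisym_of_acyclic (r : rel T) :
  (forall x s, s <> [::] -> path r x s -> last x s <> x) ->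
  antisymmetric (connect r).
Proof.
move=> acyclic x y /andP[/connectP[p walk_p p_end] /connectP[q walk_q q_end]].
apply/eqP/negPn/negP => neq; apply: (acyclic x (p ++ q)).
- by case: p {walk_p} p_end => [|? ?] //= y_x; rewrite y_x eqxx in neq.
- by rewrite cat_path walk_p -p_end.
- by rewrite last_cat -p_end.
Qed.

End Walks.

Section InfluenceOrder.
Variables (T : finType) (e : rel T) (I O : {set T}) (f : T -> T)
  (P : seq (seq T)).
Hypotheses (graph : simple_graph e) (induced : induced_by O f P).

Definition influence (v w : T) : bool :=
  if excluded_middle_informative (infl_segment e P v w) then true else false.

Lemma influenceP v w : reflect (infl_segment e P v w) (influence v w).
Proof. by rewrite /influence; case: excluded_middle_informative; constructor. Qed.

(* Under a flow, every influencing segment strictly increases the order: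
   its endpoint is f v, or a neighbour of f v distinct from v. *)
Lemma flow_segment_strict (le : rel T) v w :
  is_flow e I O f le -> infl_segment e P v w -> le v w /\ v <> w.
Proof.
have [e_sym e_irr] := graph.
case=> _ _ _ flow [arc | [z [arc e_zw uncovered]]].
- have [vO <-] := (induced v w).1 arc; have [_ e_vf le_vf _] := flow v vO.
  by split=> // eq_vf; move: e_vf; rewrite -eq_vf e_irr.
- have [vO fv_z] := (induced v z).1 arc; have [_ _ _ le_nb] := flow v vO.
  split; first by apply: le_nb; rewrite fv_z e_sym.
  by move=> eq_vw; apply: uncovered; right; rewrite -eq_vw.
Qed.

Lemma influence_succ v : v \notin O -> influence v (f v).
Proof. by move=> vO; apply/influenceP; left; exact/induced. Qed.

Lemma influence_neighbour v w :
  (forall v w, v \notin O -> w \notin O -> f v = f w -> v = w) ->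
  v \notin O -> e w (f v) -> connect influence v w.
Proof.
move=> f_inj vO e_w_fv; have [e_sym _] := graph.
have [[arc | arc] | uncovered] := classic (covered P (f v) w).
- have [fvO <-] := (induced _ _).1 arc.
  apply: connect_trans (connect1 (influence_succ vO)) _.
  exact/connect1/influence_succ.
- have [wO fw_fv] := (induced _ _).1 arc.
  by rewrite (f_inj _ _ vO wO (esym fw_fv)) connect0.
- apply/connect1/influenceP; right; exists (f v); split=> //.
  + exact/induced.
  + by rewrite e_sym.
Qed.

Lemma influence_order_flow :
  successor_function e I O f -> ~ has_vicious_circuit e P ->
  is_flow e I O f (connect influence).
Proof.
case=> f_inj f_succ _ no_circuit; split.
- exact: connect0.
- apply: connect_antisym_of_acyclic => x s s_nz walk closed.
  apply: no_circuit; exists x, s; split=> //.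
  by apply: path_pwalk walk => v w /influenceP.
- exact: connect_trans.
- move=> v vO; have [e_vf fvI] := f_succ v vO; split=> //.
  + exact/connect1/influence_succ.
  + by move=> w; apply: influence_neighbour.
Qed.

End InfluenceOrder.

Theorem mainTheorem5 (T : finType) (e : rel T) (I O : {set T}) (f : T -> T)
    (Pf : seq (seq T)) :
  simple_graph e ->
  successor_function e I O f ->
  path_cover e I O Pf -> induced_by O f Pf ->
  (flow_function e I O f <-> causal_path_cover e I O Pf).
Proof.
move=> graph succ cover induced; split.
- case=> le flow; split=> // -[x [s [s_nz walk closed]]].
  have [_ le_anti le_trans _] := flow.
  apply: (strict_walk_not_closed le_trans le_anti _ s_nz walk closed).
  by move=> v w; apply: (flow_segment_strict graph induced flow).
- case=> _ no_circuit; exists (connect (influence e Pf)).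
  exact: influence_order_flow.
Qed.
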